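(* For every integer $n\ge 0$, \[ (p_{2,5}+p_{3,5})(n)=p(n)+\sum_{k=1}^\infty (-1)^k \big(p(n-P_{7,k}) +p(n-Q_{7,k})\big),\] where $P_{7,k}=\frac{k(5k-3)}{2}$ and $Q_{7,k}=\frac{k(5k+3)}{2}$.
   Context: $p(n)$ is the number of integer partitions of $n$, with $p(0)=1$ and $p(x)=0$ for $x<0$. $(p_{2,5}+p_{3,5})(n)$ denotes the number of partitions of $n$ in which every part is congruent to $2$ or to $3$ modulo $5$ (equal to $1$ for $n=0$, and $0$ for $n\notin\mathbb{N}_0$). *)

From mathcomp Require Import all_boot all_order all_algebra.
Set Implicit Arguments. Unset Strict Implicit. Unset Printing Implicit Defensive.
Import GRing.Theory Num.Theory.

(* A partition of n is encoded by its multiplicity function: m i = number of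
   parts equal to i.+1 (parts lie in 1..n, each multiplicity is <= n, so
   m : {ffun 'I_n -> 'I_n.+1}). *)
Definition is_partition_with (P : pred nat) (n : nat) (m : {ffun 'I_n -> 'I_n.+1}) : bool :=
  ((\sum_(i < n) i.+1 * m i)%N == n) && [forall i, (0 < m i)%N ==> P i.+1].

Definition npart_with (P : pred nat) (n : nat) : nat :=
  #|[set m : {ffun 'I_n -> 'I_n.+1} | @is_partition_with P n m]|.

Definition npart (n : nat) : nat := npart_with predT n.

Definition npart23mod5 (n : nat) : nat :=
  npart_with (fun a => (a %% 5 == 2) || (a %% 5 == 3))%N n.

Definition npartZ (x : int) : int :=
  match x with Posz n => (npart n)%:Z | Negz _ => 0 end.

Definition P7 (k : nat) : nat := (k * (5 * k - 3)) %/ 2.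
Definition Q7 (k : nat) : nat := (k * (5 * k + 3)) %/ 2.

(* Partitions into parts congruent to 2 or 3 mod 5 have generating function
   F(q) / (q;q)_oo, where F(q) = prod_(i >= 0) (1 - q^(5i+1)) (1 - q^(5i+4)) (1 - q^(5i+5)),
   and by the Jacobi triple product F(q) = 1 + sum_(k >= 1) (-1)^k (q^(P_k) + q^(Q_k));
   the identity is the coefficient of q^n.  Only coefficients up to q^n matter, so every
   series is replaced by a polynomial that agrees with it up to degree n.  The triple
   product comes from the q-binomial theorem applied to prod_(i < 2m) (q^(5m-1) - q^(5i)):
   multiplied by (q^5;q^5)_n, its Gaussian binomials [2m, m +- k] in base q^5 are 1 up
   to degree n once m > 2n. *)

From mathcomp Require Import all_boot all_order all_algebra.
From mathcomp Require Import zify ring.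

Set Implicit Arguments.
Unset Strict Implicit.
Unset Printing Implicit Defensive.

Import GRing.Theory Num.Theory.
Local Open Scope ring_scope.

Section EqUpto.
Variable R : nzRingType.
Implicit Types p q : {poly R}.

Definition eq_upto n p q := forall i, (i <= n)%N -> p`_i = q`_i.

Lemma eq_upto_refl n p : eq_upto n p p.
Proof. by []. Qed.

Lemma eq_upto_sym n p q : eq_upto n p q -> eq_upto n q p.
Proof. by move=> pq i le_in; rewrite pq. Qed.

Lemma eq_upto_trans n p q r : eq_upto n p q -> eq_upto n q r -> eq_upto n p r.
Proof. by move=> pq qr i le_in; rewrite pq // qr. Qed.

Lemma eq_uptoD n p p' q q' :
  eq_upto n p p' -> eq_upto n q q' -> eq_upto n (p + q) (p' + q').
Proof. by move=> pp' qq' i le_in; rewrite !coefD pp' // qq'. Qed.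

Lemma eq_uptoM n p p' q q' :
  eq_upto n p p' -> eq_upto n q q' -> eq_upto n (p * q) (p' * q').
Proof.
move=> pp' qq' i le_in; rewrite !coefM; apply: eq_bigr => j _.
have le_jn : (j <= n)%N by rewrite (leq_trans _ le_in) // -ltnS.
by rewrite pp' // qq' // (leq_trans (leq_subr _ _) le_in).
Qed.

Lemma eq_upto_sum n (I : Type) (r : seq I) (P : pred I) (F G : I -> {poly R}) :
  (forall i, P i -> eq_upto n (F i) (G i)) ->
  eq_upto n (\sum_(i <- r | P i) F i) (\sum_(i <- r | P i) G i).
Proof. by move=> FG; apply: big_ind2 => // *; apply: eq_uptoD. Qed.

Lemma eq_upto_prod n (I : Type) (r : seq I) (P : pred I) (F G : I -> {poly R}) :
  (forall i, P i -> eq_upto n (F i) (G i)) ->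
  eq_upto n (\prod_(i <- r | P i) F i) (\prod_(i <- r | P i) G i).
Proof. by move=> FG; apply: big_ind2 => // *; apply: eq_uptoM. Qed.

Lemma eq_upto_sum0 n (I : Type) (r : seq I) (P : pred I) (F : I -> {poly R}) :
  (forall i, P i -> eq_upto n (F i) 0) -> eq_upto n (\sum_(i <- r | P i) F i) 0.
Proof.
move=> F0; apply: (big_ind (eq_upto n ^~ 0)) => // x y x0 y0.
by rewrite -[0]addr0; apply: eq_uptoD.
Qed.

Lemma eq_upto_prod1 n (I : Type) (r : seq I) (P : pred I) (F : I -> {poly R}) :
  (forall i, P i -> eq_upto n (F i) 1) -> eq_upto n (\prod_(i <- r | P i) F i) 1.
Proof.
move=> F1; apply: (big_ind (eq_upto n ^~ 1)) => // x y x1 y1.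
by rewrite -[1]mulr1; apply: eq_uptoM.
Qed.

Lemma eq_upto_Xn0 n a : (n < a)%N -> eq_upto n 'X^a 0.
Proof. by move=> lt_na i le_in; rewrite coefXn coef0 ltn_eqF // (leq_ltn_trans le_in lt_na). Qed.

Lemma eq_upto_mulr0 n p q : eq_upto n q 0 -> eq_upto n (p * q) 0.
Proof. by move=> q0; rewrite -(mulr0 p); apply: eq_uptoM. Qed.

Lemma eq_upto_subXn n a : (n < a)%N -> eq_upto n (1 - 'X^a) 1.
Proof.
move=> lt_na i le_in; rewrite coefB coefXn.
by rewrite ltn_eqF ?subr0 // (leq_ltn_trans le_in lt_na).
Qed.

Lemma eq_upto_sum_tail n (P : pred nat) (F : nat -> {poly R}) a b : (a <= b)%N ->
  (forall i, (a <= i)%N -> P i -> eq_upto n (F i) 0) ->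
  eq_upto n (\sum_(i < b | P i) F i) (\sum_(i < a | P i) F i).
Proof.
move=> le_ab F0; rewrite -!(big_mkord P) (big_cat_nat (leq0n a) le_ab) /=.
rewrite -[X in eq_upto _ _ X]addr0; apply: eq_uptoD => //.
by rewrite big_nat_cond; apply: eq_upto_sum0 => i /andP[/andP[le_ai _]]; apply: F0.
Qed.

Lemma eq_upto_prod_tail n (P : pred nat) (F : nat -> {poly R}) a b : (a <= b)%N ->
  (forall i, (a <= i)%N -> P i -> eq_upto n (F i) 1) ->
  eq_upto n (\prod_(i < b | P i) F i) (\prod_(i < a | P i) F i).
Proof.
move=> le_ab F1; rewrite -!(big_mkord P) (big_cat_nat (leq0n a) le_ab) /=.
rewrite -[X in eq_upto _ _ X]mulr1; apply: eq_uptoM => //.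
by rewrite big_nat_cond; apply: eq_upto_prod1 => i /andP[/andP[le_ai _]]; apply: F1.
Qed.

End EqUpto.

Lemma eq_upto_cancel_monomial (R : comNzRingType) n (s u v : {poly R}) e :
  ((e <= n)%N -> eq_upto n (u * v) 1) -> eq_upto n (s * u * 'X^e * v) (s * 'X^e).
Proof.
move=> uv1; have -> : s * u * 'X^e * v = s * 'X^e * (u * v) by ring.
case: (ltnP n e) => [lt_ne | le_en].
  have Xe0 : eq_upto n (s * 'X^e) 0 := eq_upto_mulr0 s (eq_upto_Xn0 _ lt_ne).
  by apply: eq_upto_trans _ (eq_upto_sym Xe0); rewrite -(mul0r (u * v)); apply: eq_uptoM.
by rewrite -[X in eq_upto _ _ X]mulr1; apply: eq_uptoM => //; apply: uv1.
Qed.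

Lemma geometric_sum (R : pzRingType) (x : R) n :
  (1 - x) * \sum_(t < n) x ^+ t = 1 - x ^+ n.
Proof. by rewrite -opprB mulNr -subrX1 opprB. Qed.

Lemma bin2S n : 'C(n.+1, 2) = ('C(n, 2) + n)%N.
Proof. by rewrite binS bin1. Qed.

Lemma bin2D m n : 'C(m + n, 2) = ('C(m, 2) + 'C(n, 2) + m * n)%N.
Proof.
elim: n => [|n IH]; first by rewrite addn0 muln0 bin0n !addn0.
by rewrite addnS !bin2S IH; lia.
Qed.

Lemma mul2_bin2 n : (2 * 'C(n, 2) = n * n.-1)%N.
Proof. by elim: n => // n IH; rewrite bin2S mulnDr IH; case: n {IH} => //= n; lia. Qed.

Lemma prod_oppXn (R : comNzRingType) d m :
  \prod_(i < m) (- 'X^(d * i)) = (-1) ^+ m * 'X^(d * 'C(m, 2)) :> {poly R}.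
Proof.
elim: m => [|m IH]; first by rewrite big_ord0 bin0n muln0 expr0 mulr1.
by rewrite big_ord_recr /= IH bin2S mulnDr exprD exprS; ring.
Qed.

Lemma signr_subn (R : pzRingType) m j : (j <= m)%N ->
  (-1) ^+ (m - j) = (-1) ^+ m * (-1) ^+ j :> R.
Proof. by move=> le_jm; rewrite -{2}(subnK le_jm) exprD -mulrA -expr2 sqrr_sign mulr1. Qed.

Section QBinomial.
Variables (R : comNzRingType) (q : R).

Fixpoint qbin (N j : nat) : R :=
  match N, j with
  | _, 0 => 1
  | 0, _.+1 => 0
  | N'.+1, j'.+1 => q ^+ (N' - j') * qbin N' j' + qbin N' j'.+1
  end.

Lemma qbin0 N : qbin N 0 = 1.
Proof. by case: N. Qed.

Lemma qbin_small N j : (N < j)%N -> qbin N j = 0.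
Proof.
elim: N j => [|N IH] [|j] //= lt_Nj.
by rewrite !IH ?mulr0 ?addr0 // ltnW.
Qed.

Lemma qbinn N : qbin N N = 1.
Proof. by elim: N => //= N ->; rewrite subnn mulr1 qbin_small ?addr0. Qed.

Theorem qbinomial (y z : R) N :
  \prod_(i < N) (y + z * q ^+ i) =
  \sum_(j < N.+1) qbin N j * q ^+ 'C(j, 2) * z ^+ j * y ^+ (N - j).
Proof.
elim: N => [|N IH]; first by rewrite big_ord0 big_ord1 /= !mul1r.
rewrite big_ord_recr /= IH [RHS]big_ord_recl /= mulrDr !mulr_suml big_ord_recl /=.
under [X in _ = _ + X]eq_bigr => j _ do rewrite /bump /= add1n !mulrDl.
rewrite big_split /= [X in _ = _ + (_ + X)]big_ord_recr /=.
rewrite !add0n (qbin_small (ltnSn N)) !mul0r addr0 !qbin0 !subn0 !expr0 !mul1r -exprSr.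
rewrite -!addrA; congr (_ + _); rewrite addrC; congr (_ + _).
  apply: eq_bigr => j _; rewrite /bump /=.
  have lt_jN := ltn_ord j.
  have qN : q ^+ N = q ^+ (N - j) * q ^+ j by rewrite -exprD subnK // ltnW.
  by rewrite bin2S qN subSS !exprD exprS; ring.
apply: eq_bigr => j _; rewrite /bump /=.
have e : (N - j = (N - j.+1).+1)%N by rewrite subnSK.
by rewrite subSS e [y ^+ _.+1]exprSr; ring.
Qed.

Definition qpoch r := \prod_(i < r) (1 - q ^+ i.+1).

Lemma qpochS r : qpoch r.+1 = qpoch r * (1 - q ^+ r.+1).
Proof. by rewrite /qpoch big_ord_recr. Qed.

Lemma qbin_qpoch N j : (j <= N)%N -> qbin N j * qpoch j * qpoch (N - j) = qpoch N.
Proof.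
elim: N j => [|N IH] [|j] //= le_jN.
- by rewrite /qpoch !big_ord0 !mul1r.
- by rewrite /qpoch big_ord0 !mul1r subn0.
rewrite ltnS leq_eqVlt in le_jN; case/orP: le_jN => [/eqP-> | lt_jN].
  by rewrite subnn qbinn qbin_small // expr0 mul1r addr0 mul1r subnn /qpoch big_ord0 mulr1.
have IHj : qbin N j * qpoch j * qpoch (N - j) = qpoch N by rewrite IH // ltnW.
have IHj1 : qbin N j.+1 * qpoch j.+1 * qpoch (N - j.+1) = qpoch N by rewrite IH.
have Nj : (N - j = (N - j.+1).+1)%N by rewrite subnSK.
have qN : q ^+ N.+1 = q ^+ (N - j) * q ^+ j.+1 by rewrite -exprD addnS subnK // ltnW.
have T1 : q ^+ (N - j) * qbin N j * qpoch j.+1 * qpoch (N - j) =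
          q ^+ (N - j) * (1 - q ^+ j.+1) * qpoch N by rewrite -IHj qpochS; ring.
have T2 : qbin N j.+1 * qpoch j.+1 * qpoch (N - j) = (1 - q ^+ (N - j)) * qpoch N.
  by rewrite -IHj1 {1}Nj (qpochS (N - j.+1)) -Nj; ring.
by rewrite subSS !mulrDl T1 T2 qpochS qN; ring.
Qed.

End QBinomial.

Section PartitionGF.
Variable R : comNzRingType.
Implicit Types (P : pred nat) (n M : nat).

Definition part_term P (i t : nat) : {poly R} :=
  if (t == 0%N) || P i.+1 then 'X^(i.+1 * t) else 0.

Definition part_gf P M : {poly R} := \prod_(i < M) \sum_(t < M.+1) part_term P i t.

Lemma prod_part_term P n (m : {ffun 'I_n -> 'I_n.+1}) :
  \prod_(i < n) part_term P i (m i) =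
  if [forall i, (0 < m i)%N ==> P i.+1] then 'X^(\sum_(i < n) i.+1 * m i) else 0.
Proof.
case: ifP => [/forallP mP | /negbT].
  rewrite -prodrXr; apply: eq_bigr => i _; rewrite /part_term.
  by case: (m i) (mP i) => [[|t]] ? //= ->.
rewrite negb_forall => /existsP[i]; rewrite negb_imply => /andP[mi_gt0 notPi].
by rewrite (bigD1 i) //= /part_term ifN ?mul0r // negb_or notPi -lt0n mi_gt0.
Qed.

Lemma coef_part_gf P n : (part_gf P n)`_n = (npart_with P n)%:R.
Proof.
rewrite /part_gf bigA_distr_bigA coef_sum /npart_with cardsE -sum1_card natr_sum.
rewrite [RHS]big_mkcond; apply: eq_bigr => m _ /=; rewrite prod_part_term.
rewrite unfold_in; case: ifP => _; rewrite ?andbF ?coef0 // coefXn andbT eq_sym.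
by case: (_ == _).
Qed.

Lemma part_gf_upto P n M : (n <= M)%N -> eq_upto n (part_gf P M) (part_gf P n).
Proof.
move=> le_nM.
have term_small i t : (n < i.+1 * t)%N -> eq_upto n (part_term P i t) 0.
  move=> lt_n; rewrite /part_term; case: ifP => _ //.
  exact: eq_upto_Xn0.
apply: eq_upto_trans (_ : eq_upto n _ (\prod_(i < n) \sum_(t < M.+1) part_term P i t)) _.
  apply: (eq_upto_prod_tail (P := xpredT) (F := fun i => \sum_(t < M.+1) part_term P i t))
    => // i le_ni _.
  have -> : 1 = \sum_(t < 1) part_term P i t by rewrite big_ord1 /part_term muln0.
  apply: (eq_upto_sum_tail (P := xpredT) (F := part_term P i)) => // t t_gt0 _.
  apply: term_small.
  by apply: leq_trans (leq_pmulr _ t_gt0); rewrite ltnS.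
apply: eq_upto_prod => i _.
apply: (eq_upto_sum_tail (P := xpredT) (F := part_term P i)) => // t lt_nt _.
by apply: term_small; rewrite (leq_trans lt_nt) // leq_pmull.
Qed.

Lemma coef_part_gf_le P n M : (n <= M)%N -> (part_gf P M)`_n = (npart_with P n)%:R.
Proof. by move=> le_nM; rewrite (part_gf_upto P le_nM) // coef_part_gf. Qed.

Lemma part_gf_restrict P n :
  eq_upto n (\prod_(i < n | ~~ P i.+1) (1 - 'X^(i.+1)) * part_gf predT n) (part_gf P n).
Proof.
rewrite big_mkcond /part_gf -big_split /=; apply: eq_upto_prod => i _.
case Pi: (P i.+1) => /=.
  by rewrite mul1r; apply: eq_upto_sum => t _; rewrite /part_term Pi orbT.
have -> : \sum_(t < n.+1) part_term P i t = 1.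
  by rewrite big_ord_recl big1 => [|t _]; rewrite /part_term Pi ?muln0 ?addr0.
rewrite (eq_bigr (fun t : 'I_n.+1 => 'X^(i.+1) ^+ t)) => [|t _]; last first.
  by rewrite /part_term /= orbT exprM.
by rewrite geometric_sum -exprM; apply: eq_upto_subXn; rewrite leq_pmull.
Qed.

End PartitionGF.

Definition pentagonal (d c k : nat) := (d * 'C(k, 2) + c * k)%N.

Lemma qbin_exp_upper a b m k : (a <= (a + b) * m)%N -> (k <= m)%N ->
  ((a + b) * 'C(m + k, 2) + ((a + b) * m - a) * (m + m - (m + k)) =
   (a + b) * 'C(m, 2) + ((a + b) * m - a) * m + pentagonal (a + b) a k)%N.
Proof.
move=> le_a_dm le_km; have [r mE] : exists r, m = (r + k)%N.
  by exists (m - k)%N; rewrite subnK.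
subst m.
rewrite /pentagonal bin2D (_ : (r + k + (r + k) - (r + k + k) = r)%N); last by lia.
move: (subnK le_a_dm); set c := (_ - a)%N => /(congr1 (muln^~ k)) /= hck; nia.
Qed.

Lemma qbin_exp_lower a b m k : (a <= (a + b) * m)%N -> (k <= m)%N ->
  ((a + b) * 'C(m - k, 2) + ((a + b) * m - a) * (m + m - (m - k)) =
   (a + b) * 'C(m, 2) + ((a + b) * m - a) * m + pentagonal (a + b) b k)%N.
Proof.
move=> le_a_dm le_km; have [r mE] : exists r, m = (r + k)%N.
  by exists (m - k)%N; rewrite subnK.
subst m.
rewrite /pentagonal addnK bin2D (_ : (r + k + (r + k) - r = r + k + k)%N); last by lia.
move: (subnK le_a_dm) (mul2_bin2 k); set c := (_ - a)%N; clearbody c => /(congr1 (muln^~ k)) /= hck.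
case: k le_km le_a_dm hck => [|k] /= _ _ hck h2; nia.
Qed.

Lemma leq_pentagonal d c k : (0 < c)%N -> (k <= pentagonal d c k)%N.
Proof. by move=> c_gt0; rewrite /pentagonal (leq_trans (leq_pmull k c_gt0)) ?leq_addl. Qed.

Section QPochUpto.
Variables (R : comNzRingType) (c : nat).
Hypothesis c_gt0 : (0 < c)%N.
Local Notation qX := ('X^c : {poly R}).

Lemma qpoch_upto n r : (n <= r)%N -> eq_upto n (qpoch qX r) (qpoch qX n).
Proof.
move=> le_nr; apply: (eq_upto_prod_tail (P := xpredT) (F := fun i => 1 - qX ^+ i.+1))
  => // i le_ni _.
by rewrite -exprM; apply: eq_upto_subXn; apply: leq_trans (leq_pmull _ c_gt0); rewrite ltnS.
Qed.

Lemma qpoch_inv_upto n :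
  eq_upto n (qpoch qX n * \prod_(i < n) \sum_(t < n.+1) (qX ^+ i.+1) ^+ t) 1.
Proof.
rewrite /qpoch -big_split /=; apply: eq_upto_prod1 => i _.
by rewrite geometric_sum -!exprM; apply: eq_upto_subXn; nia.
Qed.

Lemma qbin_qpoch_upto n N j : (j <= N)%N -> (n <= j)%N -> (n <= N - j)%N ->
  eq_upto n (qbin qX N j * qpoch qX n) 1.
Proof.
move=> le_jN le_nj le_nNj; have inv1 := @qpoch_inv_upto n.
set inv := \prod_(i < n) _ in inv1.
have qpoch_n k : (n <= k)%N -> eq_upto n (qpoch qX n) (qpoch qX k).
  by move=> le_nk; apply/eq_upto_sym/qpoch_upto.
apply: eq_upto_trans (_ : eq_upto n _ (qbin qX N j * (qpoch qX j * (qpoch qX (N - j) * inv)))) _.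
  rewrite -[qpoch qX n]mulr1; apply: eq_uptoM => //; apply: eq_uptoM; first exact: qpoch_n.
  apply: eq_upto_sym (eq_upto_trans (eq_uptoM (qpoch_upto le_nNj) (eq_upto_refl inv)) inv1).
rewrite !mulrA qbin_qpoch //; apply: eq_upto_trans inv1.
by apply: eq_uptoM => //; apply: qpoch_upto; rewrite (leq_trans le_nj).
Qed.

End QPochUpto.

Section TripleProduct.
Variables (R : comNzRingType) (a b : nat).
Hypotheses (a_gt0 : (0 < a)%N) (b_gt0 : (0 < b)%N).
Local Notation d := (a + b)%N.

Definition triple_prod m : {poly R} :=
  \prod_(i < m) ((1 - 'X^(d * i + a)) * (1 - 'X^(d * i + b))).

(* Specialise the q-binomial theorem to q = 'X^d, y = 'X^(d m - a), z = -1 and 2m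
   factors: the first m factors, read backwards, give the factors 1 - 'X^(d i + b),
   the last m give the factors 1 - 'X^(d i + a). *)
Lemma triple_prod_qbinomial m : (0 < m)%N ->
  (-1) ^+ m * 'X^(d * 'C(m, 2) + (d * m - a) * m) * triple_prod m =
  \sum_(j < (m + m).+1)
     qbin 'X^d (m + m) j * 'X^d ^+ 'C(j, 2) * (-1) ^+ j * 'X^(d * m - a) ^+ (m + m - j).
Proof.
move=> m_gt0; have le_a_dm : (a <= d * m)%N by rewrite (leq_trans (leq_addr b a)) // leq_pmulr.
rewrite -qbinomial big_split_ord /=.
have -> : \prod_(i < m) ('X^(d * m - a) + -1 * 'X^d ^+ lshift m i) =
          (-1) ^+ m * 'X^(d * 'C(m, 2)) * \prod_(i < m) (1 - 'X^(d * i + b)) :> {poly R}.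
  rewrite -prod_oppXn [X in _ = _ * X](reindex_inj rev_ord_inj) -big_split /=.
  apply: eq_bigr => i _; have lt_im := ltn_ord i.
  rewrite -exprM mulrBr mulr1 !mulNr opprK -exprD mul1r addrC; congr (_ + 'X^_).
  rewrite addnA -mulnDr (_ : (i + (m - i.+1) = m.-1)%N); last by lia.
  by rewrite -{1}(prednK m_gt0) mulnS; lia.
have -> : \prod_(i < m) ('X^(d * m - a) + -1 * 'X^d ^+ rshift m i) =
          'X^((d * m - a) * m) * \prod_(i < m) (1 - 'X^(d * i + a)) :> {poly R}.
  have -> : 'X^((d * m - a) * m) = \prod_(i < m) 'X^(d * m - a) :> {poly R}.
    by rewrite prodr_const card_ord exprM.
  rewrite -big_split /=; apply: eq_bigr => i _.
  by rewrite -exprM mulrBr mulr1 -exprD mulN1r; congr (_ - 'X^_); lia.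
by rewrite /triple_prod big_split /= (exprD _ (d * _)); ring.
Qed.

Lemma triple_prod_qbin m : triple_prod m =
  \sum_(k < m.+1) (-1) ^+ k * qbin 'X^d (m + m) (m + k) * 'X^(pentagonal d a k) +
  \sum_(k < m) (-1) ^+ k.+1 * qbin 'X^d (m + m) (m - k.+1) * 'X^(pentagonal d b k.+1).
Proof.
have [->|m_gt0] := posnP m.
  by rewrite /triple_prod !big_ord0 big_ord1 /= /pentagonal /= !muln0 expr0 !mul1r addr0.
have le_a_dm : (a <= d * m)%N by rewrite (leq_trans (leq_addr b a)) // leq_pmulr.
pose K := (d * 'C(m, 2) + (d * m - a) * m)%N.
have reg_K : GRing.lreg ((-1) ^+ m * 'X^K : {poly R}).
  apply: lregM; first exact: lreg_sign.
  by apply: lreg_lead; rewrite (lead_coefXn R K); apply: lreg1.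
apply: reg_K; rewrite triple_prod_qbinomial //.
rewrite -(big_mkord xpredT (fun j => qbin 'X^d (m + m) j * 'X^d ^+ 'C(j, 2) *
  (-1) ^+ j * 'X^(d * m - a) ^+ (m + m - j))) (big_cat_nat (leq0n m) (leqW (leq_addr m m))) /=.
rewrite (big_addn 0 _ m) (_ : ((m + m).+1 - m = m.+1)%N); last by lia.
rewrite big_nat_rev !big_mkord mulrDr addrC !big_distrr /=.
congr (_ + _); apply: eq_bigr => k _ /=.
  have le_km : (k <= m)%N by rewrite -ltnS.
  rewrite [(k + m)%N]addnC -!exprM [(-1) ^+ (m + k)]exprD.
  rewrite [LHS](_ : _ = (-1) ^+ m * (-1) ^+ k * qbin 'X^d (m + m) (m + k) *
    'X^(d * 'C(m + k, 2) + (d * m - a) * (m + m - (m + k)))).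
    by rewrite qbin_exp_upper // /K !(exprD _ (_ + _ * _)); ring.
  by rewrite (exprD _ (d * _)); ring.
have le_km : (k.+1 <= m)%N by [].
rewrite add0n signr_subn // -!exprM.
rewrite [LHS](_ : _ = (-1) ^+ m * (-1) ^+ k.+1 * qbin 'X^d (m + m) (m - k.+1) *
  'X^(d * 'C(m - k.+1, 2) + (d * m - a) * (m + m - (m - k.+1)))).
  by rewrite qbin_exp_lower // /K !(exprD _ (_ + _ * _)); ring.
by rewrite (exprD _ (d * _)); ring.
Qed.

Definition theta_partial L : {poly R} :=
  1 + \sum_(k < L) (-1) ^+ k.+1 * ('X^(pentagonal d a k.+1) + 'X^(pentagonal d b k.+1)).

Lemma theta_partial_upto n L : (n <= L)%N -> eq_upto n (theta_partial L) (theta_partial n).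
Proof.
move=> le_nL; apply: eq_uptoD => //; apply: (eq_upto_sum_tail (P := xpredT)
  (F := fun k => (-1) ^+ k.+1 * ('X^(pentagonal d a k.+1) + 'X^(pentagonal d b k.+1))))
  => // k le_nk _.
apply: eq_upto_mulr0; rewrite -[0]addr0.
by apply: eq_uptoD; apply: eq_upto_Xn0;
  [apply: leq_trans _ (leq_pentagonal _ _ a_gt0) | apply: leq_trans _ (leq_pentagonal _ _ b_gt0)].
Qed.

Lemma theta_partialE L : theta_partial L =
  1 + \sum_(k < L) (-1) ^+ k.+1 * 'X^(pentagonal d a k.+1) +
      \sum_(k < L) (-1) ^+ k.+1 * 'X^(pentagonal d b k.+1).
Proof.
by rewrite /theta_partial -addrA -big_split; congr (_ + _); apply: eq_bigr => k _; rewrite mulrDr.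
Qed.

Lemma triple_prod_qpoch_upto n m : (n.*2 < m)%N ->
  eq_upto n (triple_prod m * qpoch 'X^d n) (theta_partial m).
Proof.
have d_gt0 : (0 < d)%N by rewrite addn_gt0 a_gt0.
move=> lt_2n_m; rewrite triple_prod_qbin theta_partialE mulrDl !mulr_suml big_ord_recl.
apply: eq_uptoD; first apply: eq_uptoD.
- rewrite [X in eq_upto _ _ X](_ : 1 = (-1) ^+ 0 * 'X^(pentagonal d a 0)); last first.
    by rewrite /pentagonal /= !muln0 mulr1.
  by apply: eq_upto_cancel_monomial => _; apply: (qbin_qpoch_upto _ d_gt0); rewrite /= addn0; lia.
- apply: eq_upto_sum => k _; rewrite lift0.
  apply: eq_upto_cancel_monomial => le_pn; have := leq_pentagonal d k.+1 a_gt0.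
  by move=> le_kp; apply: (qbin_qpoch_upto _ d_gt0); lia.
- apply: eq_upto_sum => k _.
  apply: eq_upto_cancel_monomial => le_pn; have := leq_pentagonal d k.+1 b_gt0.
  by move=> le_kp; apply: (qbin_qpoch_upto _ d_gt0); lia.
Qed.

Lemma triple_prod_theta_upto n L : (n <= L)%N ->
  eq_upto n (triple_prod n * qpoch 'X^d n) (theta_partial L).
Proof.
move=> le_nL.
apply: eq_upto_trans (_ : eq_upto n _ (triple_prod n.*2.+1 * qpoch 'X^d n)) _.
  apply: eq_uptoM => //; apply: eq_upto_sym.
  apply: (eq_upto_prod_tail (P := xpredT)
    (F := fun i => (1 - 'X^(d * i + a)) * (1 - 'X^(d * i + b)))) => [|i le_ni _]; first lia.
  by rewrite -[X in eq_upto _ _ X]mulr1; apply: eq_uptoM; apply: eq_upto_subXn; nia.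
apply: eq_upto_trans (triple_prod_qpoch_upto (ltnSn _)) _.
by apply: eq_upto_trans (theta_partial_upto _) (eq_upto_sym (theta_partial_upto le_nL)); lia.
Qed.

End TripleProduct.

Definition in_23_mod5 : pred nat := fun a => ((a %% 5 == 2) || (a %% 5 == 3))%N.

Lemma prod_not23_mod5 (R : comNzRingType) M :
  \prod_(i < 5 * M | ~~ in_23_mod5 i.+1) (1 - 'X^(i.+1)) =
  triple_prod R 1 4 M * qpoch 'X^5 M.
Proof.
rewrite /triple_prod /qpoch -big_split big_mkcond /=.
elim: M => [|M IH]; first by rewrite muln0 !big_ord0.
rewrite (_ : 5 * M.+1 = (5 * M).+4.+1)%N; last by lia.
rewrite !big_ord_recr /= IH.
have r1 : in_23_mod5 (5 * M).+1 = false by rewrite /in_23_mod5; lia.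
have r2 : in_23_mod5 (5 * M).+2 by rewrite /in_23_mod5; lia.
have r3 : in_23_mod5 (5 * M).+3 by rewrite /in_23_mod5; lia.
have r4 : in_23_mod5 (5 * M).+4 = false by rewrite /in_23_mod5; lia.
have r5 : in_23_mod5 (5 * M).+4.+1 = false by rewrite /in_23_mod5; lia.
rewrite r1 r2 r3 r4 r5 /= -exprM !mulr1 (_ : (1 + 4) * M = 5 * M)%N //.
by rewrite [(5 * M + 1)%N]addn1 [(5 * M + 4)%N]addn4 (_ : 5 * M.+1 = (5 * M).+1.+4)%N; [ring | lia].
Qed.

Lemma P7E k : P7 k = pentagonal 5 1 k.
Proof.
rewrite /P7 /pentagonal (_ : k * (5 * k - 3) = 2 * (5 * 'C(k, 2) + 1 * k))%N ?mulKn //.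
by have := mul2_bin2 k; case: k => //= k; nia.
Qed.

Lemma Q7E k : Q7 k = pentagonal 5 4 k.
Proof.
rewrite /Q7 /pentagonal (_ : k * (5 * k + 3) = 2 * (5 * 'C(k, 2) + 4 * k))%N ?mulKn //.
by have := mul2_bin2 k; case: k => //= k; nia.
Qed.

Lemma npartZ_subn n a :
  npartZ (n%:Z - a%:Z) = if (n < a)%N then 0 else (npart (n - a))%:Z.
Proof.
case: ltnP => [lt_na | le_an]; last by rewrite subzn.
by rewrite (_ : n%:Z - a%:Z = Negz (a - n).-1) // NegzE; lia.
Qed.

Lemma coef_Xn_part_gf n a : ('X^a * part_gf int predT n)`_n = npartZ (n%:Z - a%:Z).
Proof.
rewrite coefXnM npartZ_subn; case: ifP => // _.
by rewrite coef_part_gf_le ?leq_subr // natz.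
Qed.

Lemma coef_theta_part_gf a b L n :
  (theta_partial int a b L * part_gf int predT n)`_n = (npart n)%:Z +
  \sum_(k < L) (-1) ^+ k.+1 * (npartZ (n%:Z - (pentagonal (a + b) a k.+1)%:Z) +
                              npartZ (n%:Z - (pentagonal (a + b) b k.+1)%:Z)).
Proof.
rewrite mulrDl mul1r coefD coef_part_gf natz mulr_suml coef_sum; congr (_ + _).
apply: eq_bigr => k _; rewrite -mulrA -polyC1 -polyCN -polyC_exp coefCM.
by rewrite mulrDl coefD !coef_Xn_part_gf.
Qed.

Lemma part_gf_23mod5_upto (R : comNzRingType) n L : (n <= L)%N ->
  eq_upto n (theta_partial R 1 4 L * part_gf R predT n) (part_gf R in_23_mod5 n).
Proof.
move=> le_nL; apply: eq_upto_trans (eq_upto_sym (eq_uptoM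
  (triple_prod_theta_upto _ _ _ le_nL) (eq_upto_refl (part_gf R predT n)))) _ => //.
rewrite -prod_not23_mod5; apply: eq_upto_trans _ (@part_gf_restrict R in_23_mod5 n).
apply: eq_uptoM => //.
apply: (eq_upto_prod_tail (P := fun i => ~~ in_23_mod5 i.+1) (F := fun i => 1 - 'X^(i.+1)))
  => [|i le_ni _]; [lia | exact: eq_upto_subXn].
Qed.

Theorem theorem2p2 (n N : nat) (hN : (n < N)%N) :
  (npart23mod5 n)%:Z =
  (npart n)%:Z + \sum_(1 <= k < N)
     (-1) ^+ k * (npartZ (n%:Z - (P7 k)%:Z) + npartZ (n%:Z - (Q7 k)%:Z)).
Proof.
have le_nN : (n <= N.-1)%N by lia.
rewrite big_add1 big_mkord -[LHS]natz -coef_part_gf.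
rewrite -(part_gf_23mod5_upto _ le_nN (leqnn n)) coef_theta_part_gf.
by congr (_ + _); apply: eq_bigr => k _; rewrite P7E Q7E.
Qed.
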